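(* For any pair of rooted trees $T_1,T_2$ on leaf set $[n]$, the cone $K_{T_1}+K_{T_2}$, considered in $\mathbb{R}^{\binom{[n]}{2}}/\mathbb{R}(1,\dots,1)^T$, is a simplicial cone generated by $\{-v_C\}_{C\in\mathrm{clade}^\circ(T_1)\cup\mathrm{clade}^\circ(T_2)}$; that is, $K_{T_1}+K_{T_2}=\mathbb{R}(1,\dots,1)^T+\mathrm{cone}\{-v_C: C\in\mathrm{clade}^\circ(T_1)\cup\mathrm{clade}^\circ(T_2)\}$, and the images of these generators in the quotient $\mathbb{R}^{\binom{[n]}{2}}/\mathbb{R}(1,\dots,1)^T$ are linearly independent.
   Context: A rooted tree on leaf set $[n]$ has leaves labeled bijectively by $[n]$ and internal vertices each with at least two children. A clade of $T$ is the set of leaves below an internal vertex; $\mathrm{clade}(T)$ is the set of clades and $\mathrm{clade}^\circ(T)=\mathrm{clade}(T)\setminus\{[n]\}$. For $C\subseteq[n]$, $v_C\in\mathbb{R}^{\binom{[n]}{2}}$ is the characteristic vector of $\binom{C}{2}$. An ultrametric is $\delta\in\mathbb{R}^{\binom{[n]}{2}}$ with $\delta_{uv}\le\max\{\delta_{uw},\delta_{vw}\}$ for all distinct $u,v,w$. $K_T$ is the set of $\delta$ such that there are real weights on the internal vertices of $T$, weakly increasing along every path toward the root, with $\delta_{uv}$ equal to the weight of the most recent common ancestor of $u$ and $v$; $K_{T_1}+K_{T_2}$ is the Minkowski sum. *)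

From HB Require Import structures.
From mathcomp Require Import all_boot all_order all_algebra.
Set Implicit Arguments. Unset Strict Implicit. Unset Printing Implicit Defensive.
Import Order.TTheory GRing.Theory Num.Theory.
Local Open Scope ring_scope.

Definition pair2 (n : nat) := {p : {set 'I_n} | #|p| == 2%N}.

(* A rooted tree on leaf set [n] (leaves labelled bijectively by [n], every
   internal vertex has >= 2 children) is encoded by its set of clades
   clade(T) : the leaf sets below internal vertices.  Such families are exactly
   the hierarchies: laminar families of subsets of size >= 2 containing [n]
   (when n >= 2; for n <= 1 the tree has no internal vertex). *)
Definition is_rtree (n : nat) (T : {set {set 'I_n}}) : Prop :=
  [/\ forall C, C \in T -> (1 < #|C|)%N,
      forall C D, C \in T -> D \in T ->
        [|| C \subset D, D \subset C | [disjoint C & D]]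
    & (1 < n)%N -> [set: 'I_n] \in T].

Definition clade_o (n : nat) (T : {set {set 'I_n}}) : {set {set 'I_n}} :=
  T :\ [set: 'I_n].

Definition vC (R : pzRingType) (n : nat) (C : {set 'I_n}) : pair2 n -> R :=
  fun p => if val p \subset C then 1 else 0.

(* K_T : weights w on internal vertices (= clades), weakly increasing toward the
   root (C \subset D means D is an ancestor of C), with delta_{uv} the weight of
   the most recent common ancestor, i.e. of the smallest clade containing u,v. *)
Definition K_T (R : realFieldType) (n : nat) (T : {set {set 'I_n}})
  (delta : pair2 n -> R) : Prop :=
  exists w : {set 'I_n} -> R,
    (forall C D, C \in T -> D \in T -> C \subset D -> w C <= w D) /\
    (forall (p : pair2 n) C, C \in T -> val p \subset C ->
       (forall D, D \in T -> val p \subset D -> C \subset D) ->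
       delta p = w C).

Definition K_sum (R : realFieldType) (n : nat) (T1 T2 : {set {set 'I_n}})
  (delta : pair2 n -> R) : Prop :=
  exists d1 d2 : pair2 n -> R,
    K_T T1 d1 /\ K_T T2 d2 /\ forall p, delta p = d1 p + d2 p.

Definition line_plus_cone (R : realFieldType) (n : nat) (G : {set {set 'I_n}})
  (delta : pair2 n -> R) : Prop :=
  exists (t : R) (lam : {set 'I_n} -> R),
    (forall C, C \in G -> 0 <= lam C) /\
    forall p, delta p = t + \sum_(C in G) lam C * (- vC R C p).

Definition lin_indep_mod_ones (R : realFieldType) (n : nat)
  (G : {set {set 'I_n}}) : Prop :=
  forall (c : {set 'I_n} -> R) (t : R),
    (forall p : pair2 n, \sum_(C in G) c C * (- vC R C p) = t) ->
    forall C, C \in G -> c C = 0.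

(* A monotone weighting w of the clades of a tree is recovered from its
   nonnegative increments w (parent C) - w C by telescoping along the ancestors
   of C, so K_T is the line R(1,...,1) plus the cone on the -v_C, C a proper
   clade; and a Minkowski sum of such cones is the cone on the union of the
   generators.
   Independence: two laminar families cannot cover every pair of a set A by
   members not containing A, since covering is transitive within one laminar
   family.  So a relation sum_(C containing p) c_C = k for all pairs p yields
   sum_(D containing A) c_D = k for every A with |A| >= 2.  Taking A = [n]
   gives k = 0, and then c vanishes by downward induction on |C|. *)

From mathcomp Require Import all_boot all_order all_algebra.
Set Implicit Arguments. Unset Strict Implicit. Unset Printing Implicit Defensive.
Import Order.TTheory GRing.Theory Num.Theory.
Local Open Scope ring_scope.

Section Laminar.
Variable T : finType.
Implicit Types (F : {set {set T}}) (A C D S X : {set T}).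

Definition laminar F :=
  {in F &, forall C D, [|| C \subset D, D \subset C | [disjoint C & D]]}.

Lemma laminarS F1 F2 : F1 \subset F2 -> laminar F2 -> laminar F1.
Proof. by move=> /subsetP sF12 lamF2 C D /sF12 CF /sF12 DF; exact: lamF2. Qed.

Lemma laminar_sub_card F C D x : laminar F -> C \in F -> D \in F ->
  x \in C -> x \in D -> (#|C| <= #|D|)%N -> C \subset D.
Proof.
move=> lamF CF DF xC xD leCD.
case/or3P: (lamF C D CF DF) => // [DC | disCD].
  by have /eqP <- : D == C by rewrite eqEcard DC leCD.
by move: disCD => /disjointFr/(_ xC); rewrite xD.
Qed.

Definition hull F X := [arg min_(D < setT | (D \in F) && (X \subset D)) #|D|].

Lemma hullP F X : laminar F -> setT \in F -> X != set0 ->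
  [/\ hull F X \in F, X \subset hull F X
    & {in F, forall D, X \subset D -> hull F X \subset D}].
Proof.
move=> lamF TF X0; rewrite /hull.
case: arg_minnP => [|H /andP[HF XH] minH]; first by rewrite TF subsetT.
split=> // D DF XD; have [x xX] := set0Pn _ X0.
apply: (laminar_sub_card lamF HF DF (subsetP XH x xX) (subsetP XD x xX)).
by apply: minH; rewrite DF XD.
Qed.

Definition parent F C := hull (F :\ C) C.

Lemma parentP F C : laminar F -> setT \in F -> C != set0 -> C != setT ->
  [/\ parent F C \in F, C \proper parent F C
    & {in F, forall D, C \proper D -> parent F C \subset D}].
Proof.
move=> lamF TF C0 CT.
have [|/setD1P[PC PF] CP minP] := hullP (laminarS (subsetDl F [set C]) lamF) _ C0.
  by rewrite in_setD1 eq_sym CT.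
split=> //; first by rewrite properEneq eq_sym PC.
move=> D DF; rewrite properEneq => /andP[neCD sCD].
by apply: minP; rewrite // in_setD1 eq_sym neCD.
Qed.

Lemma parent_telescope (R : zmodType) F (w : {set T} -> R) :
  laminar F -> setT \in F -> set0 \notin F ->
  {in F, forall C,
    w C = w setT - \sum_(D in F :\ setT | C \subset D) (w (parent F D) - w D)}.
Proof.
move=> lamF TF F0 C; have [k] := ubnP #|~: C|; elim: k C => // k IHk C ltCk CF.
have [-> | CT] := eqVneq C setT.
  rewrite big_pred0 ?subr0 // => D; rewrite in_setD1 subTset.
  by case: eqP; rewrite ?andbF.
have C0 : C != set0 by apply: contraNneq F0 => <-.
have [PF CP minP] := parentP lamF TF C0 CT.
have ltPk : (#|~: parent F C| < k)%N.
  by rewrite -ltnS (leq_trans _ ltCk) // ltnS proper_card // properC.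
rewrite (bigD1 C) /=; last by rewrite in_setD1 CT CF subxx.
rewrite (eq_bigl (fun D => (D \in F :\ setT) && (parent F C \subset D))) => [|D].
  by rewrite [w (parent F C)]IHk // addrAC subrK opprB addrC subrK.
rewrite -andbA; apply: andb_id2l => /setD1P[_ DF].
apply/andP/idP => [[CD DC] | PD]; first by apply: minP; rewrite // properEneq eq_sym DC.
split; first exact: subset_trans (proper_sub CP) PD.
by apply: contraTneq PD => ->; rewrite properE in CP; case/andP: CP.
Qed.

Definition covers F u v := [exists S in F, (u \in S) && (v \in S)].

Lemma coversC F u v : covers F u v = covers F v u.
Proof. by apply: eq_existsb => S; rewrite [(u \in S) && _]andbC. Qed.

Lemma laminar_covers_trans F u v w :
  laminar F -> covers F u v -> covers F v w -> covers F u w.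
Proof.
move=> lamF /exists_inP[S SF /andP[uS vS]] /exists_inP[S' S'F /andP[vS' wS']].
apply/exists_inP; case/or3P: (lamF S S' SF S'F) => [SS' | S'S | disS].
- by exists S'; rewrite // (subsetP SS').
- by exists S; rewrite // uS (subsetP S'S).
- by move: disS => /disjointFr/(_ vS); rewrite vS'.
Qed.

Lemma laminar_uncovered F A a : laminar F -> {in F, forall S, ~~ (A \subset S)} ->
  a \in A -> (1 < #|A|)%N -> exists2 b, b \in A & (b != a) && ~~ covers F a b.
Proof.
move=> lamF notAS aA A1.
case: (boolP [exists S in F, a \in S]) => [/exists_inP[S0 S0F aS0] | /exists_inPn noS].
  have [|M /andP[MF aM] maxM] :=
    @arg_maxnP _ S0 (fun S => (S \in F) && (a \in S)) (fun S => #|S|).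
    by rewrite S0F aS0.
  have /subsetPn[b bA bM] := notAS M MF.
  exists b => //; apply/andP; split; first by apply: contraNneq bM => ->.
  apply/exists_inP => -[S SF /andP[aS bS]].
  have SM : S \subset M.
    by apply: (laminar_sub_card lamF SF MF aS aM); apply: maxM; rewrite SF.
  by move: bM; rewrite (subsetP SM).
have /card_gt0P[b /setD1P[ba bA]] : (0 < #|A :\ a|)%N.
  by move: A1; rewrite (cardsD1 a) aA add1n ltnS.
exists b; rewrite // ba; apply/exists_inP => -[S SF /andP[aS _]].
by have := noS S SF; rewrite aS.
Qed.

Lemma two_laminar_uncovered F1 F2 A : laminar F1 -> laminar F2 ->
  {in F1, forall S, ~~ (A \subset S)} -> {in F2, forall S, ~~ (A \subset S)} ->
  (1 < #|A|)%N ->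
  exists u v, [/\ u \in A, v \in A, u != v & ~~ covers F1 u v && ~~ covers F2 u v].
Proof.
move=> lamF1 lamF2 notAS1 notAS2 A1.
have /card_gt0P[a aA] : (0 < #|A|)%N by apply: ltnW.
have [b bA /andP[ba nab1]] := laminar_uncovered lamF1 notAS1 aA A1.
have [y yA /andP[ya nay2]] := laminar_uncovered lamF2 notAS2 aA A1.
have [nab2 | /negPn ab2] := boolP (~~ covers F2 a b).
  by exists a, b; rewrite eq_sym ba nab1 nab2.
have [nay1 | /negPn ay1] := boolP (~~ covers F1 a y).
  by exists a, y; rewrite eq_sym ya nay1 nay2.
exists y, b; split=> //; first by apply: contraNneq nay2 => ->.
apply/andP; split.
  by apply: contra nab1 => yb1; apply: laminar_covers_trans lamF1 ay1 yb1.
by apply: contra nay2 => yb2; apply: (laminar_covers_trans lamF2 ab2); rewrite coversC.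
Qed.

Section PairSums.
Variables (R : nmodType) (F1 F2 : {set {set T}}) (c : {set T} -> R) (k : R).
Hypotheses (lamF1 : laminar F1) (lamF2 : laminar F2).
Hypothesis pair_sum :
  forall p : {set T}, #|p| = 2 -> \sum_(D in F1 :|: F2 | p \subset D) c D = k.

Lemma laminar_supset_sum A :
  (1 < #|A|)%N -> \sum_(D in F1 :|: F2 | A \subset D) c D = k.
Proof.
move=> A1; pose notA F := [set S in F | ~~ (A \subset S)].
have notAS F : {in notA F, forall S, ~~ (A \subset S)}.
  by move=> S; rewrite inE => /andP[].
have notA_lam F : laminar F -> laminar (notA F).
  by apply: laminarS; apply/subsetP => S; rewrite inE => /andP[].
have [u [v [uA vA uv /andP[nuv1 nuv2]]]] := two_laminar_uncovered
  (notA_lam _ lamF1) (notA_lam _ lamF2) (notAS F1) (notAS F2) A1.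
rewrite -(@pair_sum [set u; v]); last by rewrite cards2 uv.
apply: eq_bigl => D; apply: andb_id2l => DF.
apply/idP/idP => [AD | uvD].
  by rewrite (subset_trans _ AD) // subUset !sub1set uA vA.
apply: contraTT uvD => nAD; rewrite subUset !sub1set.
by case/setUP: DF => DF; [apply: contra nuv1 | apply: contra nuv2];
  move=> uvD; apply/exists_inP; exists D; rewrite // inE DF.
Qed.

Lemma laminar_pair_sums_indep : setT \notin F1 :|: F2 ->
  {in F1 :|: F2, forall C, (1 < #|C|)%N -> c C = 0}.
Proof.
move=> TnF C CF C1.
have k0 : k = 0.
  rewrite -(laminar_supset_sum (A := setT)); last first.
    exact: leq_trans C1 (subset_leq_card (subsetT C)).
  rewrite big_pred0 // => D; rewrite subTset.
  by case: eqP => [->|]; rewrite ?andbF // andbT (negbTE TnF).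
have [m] := ubnP #|~: C|; elim: m C CF C1 => // m IHm C CF C1 ltCm.
rewrite -k0 -(laminar_supset_sum C1) (bigD1 C) ?CF ?subxx //= big1 ?addr0 // => D.
case/andP=> /andP[DF CD] DC; have CsD : C \proper D by rewrite properEneq eq_sym DC.
apply: IHm DF _ _; first exact: leq_trans C1 (subset_leq_card CD).
by rewrite -ltnS (leq_trans _ ltCm) // ltnS proper_card // properC.
Qed.

End PairSums.

End Laminar.

Lemma sum_setU_mask (R : pzSemiRingType) (I : finType) (A B : {set I})
    (f g h : I -> R) :
  \sum_(i in A :|: B) ((if i \in A then f i else 0) + (if i \in B then g i else 0)) * h i
    = \sum_(i in A) f i * h i + \sum_(i in B) g i * h i.
Proof.
have mask (X : {set I}) (u : I -> R) : X \subset A :|: B ->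
    \sum_(i in A :|: B) (if i \in X then u i else 0) * h i = \sum_(i in X) u i * h i.
  move=> sX; rewrite (eq_bigr (fun i => if i \in X then u i * h i else 0)) => [|i _].
    by rewrite -big_mkcondr; apply: eq_bigl => i; rewrite andb_idl // => /(subsetP sX).
  by case: ifP; rewrite ?mul0r.
under eq_bigr do rewrite mulrDl.
by rewrite big_split /= !mask ?subsetUl ?subsetUr.
Qed.

Section Trees.
Variables (R : realFieldType) (n : nat).
Implicit Types (T G : {set {set 'I_n}}) (d : pair2 n -> R).

Lemma clade_o_laminar T : is_rtree T -> laminar (clade_o T).
Proof. by case=> _ lamT _; apply: laminarS lamT; apply: subsetDl. Qed.

Lemma clade_o_gt1 T C : is_rtree T -> C \in clade_o T -> (1 < #|C|)%N.
Proof. by case=> gt1 _ _ /setD1P[_ /gt1]. Qed.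

Lemma pair2_card (p : pair2 n) : #|val p| = 2.
Proof. exact/eqP/(valP p). Qed.

Lemma pair2_gt1 (p : pair2 n) : (1 < n)%N.
Proof. by have := max_card (val p); rewrite card_ord pair2_card. Qed.

Lemma sum_vC G (lam : {set 'I_n} -> R) (p : pair2 n) :
  \sum_(C in G) lam C * - vC R C p = - \sum_(C in G | val p \subset C) lam C.
Proof.
rewrite big_mkcondr -sumrN; apply: eq_bigr => C _; rewrite /vC.
by case: ifP; rewrite ?oppr0 ?mulr0 ?mulrN1.
Qed.

Lemma line_plus_cone_sub_K_T T d : line_plus_cone (clade_o T) d -> K_T T d.
Proof.
case=> t [lam [lam_ge0 dE]].
exists (fun C : {set 'I_n} => t - \sum_(D in clade_o T | C \subset D) lam D); split.
  move=> C D _ _ CD; rewrite lerD2l lerN2 [leRHS]big_mkcondr [leLHS]big_mkcondr.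
  apply: ler_sum => E ET; case: (boolP (D \subset E)) => [DE | _].
    by rewrite (subset_trans CD DE).
  by case: ifP => // _; apply: lam_ge0.
move=> p C _ pC minC; rewrite dE sum_vC; congr (_ - _).
apply: eq_bigl => D; apply: andb_id2l => /setD1P[_ DT].
by apply/idP/idP => [pD | CD]; [apply: minC | apply: subset_trans pC CD].
Qed.

Lemma K_T_sub_line_plus_cone T d : is_rtree T -> K_T T d -> line_plus_cone (clade_o T) d.
Proof.
move=> Ttree [w [w_mono d_lca]].
have [n_le1 | n_gt1] := leqP n 1.
  by exists 0, (fun _ => 0); split=> // p; have := pair2_gt1 p; rewrite ltnNge n_le1.
have [T_gt1 lamT /(_ n_gt1) TT] := Ttree.
have T0 : set0 \notin T by apply/negP => /T_gt1; rewrite cards0.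
exists (w setT), (fun C => w (parent T C) - w C); split.
  move=> C /setD1P[CT CT']; have C0 : C != set0 by apply: contraNneq T0 => <-.
  have [PT CP _] := parentP lamT TT C0 CT.
  by rewrite subr_ge0; apply: w_mono => //; apply: proper_sub.
move=> p; have p0 : val p != set0 by rewrite -card_gt0 pair2_card.
have [HT pH minH] := hullP lamT TT p0.
rewrite (d_lca p _ HT pH minH) (parent_telescope w lamT TT T0 HT) sum_vC.
congr (_ - _); apply: eq_bigl => D; apply: andb_id2l => /setD1P[_ DT].
by apply/idP/idP => [HD | pD]; [apply: subset_trans pH HD | apply: minH].
Qed.

Lemma line_plus_coneD G1 G2 d1 d2 d :
  line_plus_cone G1 d1 -> line_plus_cone G2 d2 -> (forall p, d p = d1 p + d2 p) ->
  line_plus_cone (G1 :|: G2) d.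
Proof.
move=> [t1 [lam1 [lam1_ge0 d1E]]] [t2 [lam2 [lam2_ge0 d2E]]] dE.
exists (t1 + t2),
  (fun C => (if C \in G1 then lam1 C else 0) + (if C \in G2 then lam2 C else 0)).
split=> [C _ | p]; last by rewrite dE d1E d2E sum_setU_mask addrACA.
by apply: addr_ge0; case: ifP => // CG; [apply: lam1_ge0 | apply: lam2_ge0].
Qed.

Lemma line_plus_coneU G1 G2 d : line_plus_cone (G1 :|: G2) d ->
  exists d1 d2, [/\ line_plus_cone G1 d1, line_plus_cone G2 d2
                  & forall p, d p = d1 p + d2 p].
Proof.
case=> t [lam [lam_ge0 dE]].
pose lam2 C := if C \in G1 then 0 else lam C.
exists (fun p => t + \sum_(C in G1) lam C * - vC R C p),
       (fun p => 0 + \sum_(C in G2) lam2 C * - vC R C p); split.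
- by exists t, lam; split=> // C CG1; apply: lam_ge0; rewrite inE CG1.
- exists 0, lam2; split=> // C CG2; rewrite /lam2; case: ifP => // _.
  by apply: lam_ge0; rewrite inE CG2 orbT.
move=> p; rewrite dE add0r -addrA -sum_setU_mask; congr (_ + _).
apply: eq_bigr => C /setUP CG; rewrite /lam2; case: ifP => CG1.
  by rewrite if_same addr0.
by case: CG => [|->]; rewrite ?CG1 ?add0r.
Qed.

End Trees.

Theorem corollary3p9 (R : realFieldType) (n : nat)
  (T1 T2 : {set {set 'I_n}}) :
  is_rtree T1 -> is_rtree T2 ->
  (forall delta : pair2 n -> R,
     K_sum T1 T2 delta <->
     line_plus_cone (clade_o T1 :|: clade_o T2) delta) /\
  lin_indep_mod_ones R (clade_o T1 :|: clade_o T2).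
Proof.
move=> T1tree T2tree; split=> [d | c t c_rel C CG].
  split=> [[d1 [d2 [K1 [K2 dE]]]] | /line_plus_coneU[d1 [d2 [c1 c2 dE]]]].
    exact: line_plus_coneD (K_T_sub_line_plus_cone T1tree K1)
                           (K_T_sub_line_plus_cone T2tree K2) dE.
  by exists d1, d2; split; [|split]; rewrite //; apply: line_plus_cone_sub_K_T.
have C1 : (1 < #|C|)%N.
  by case/setUP: (CG); [apply: clade_o_gt1 T1tree | apply: clade_o_gt1 T2tree].
apply: (laminar_pair_sums_indep (k := - t) (clade_o_laminar T1tree)
          (clade_o_laminar T2tree)) _ _ CG C1; last first.
  by rewrite in_setU !in_setD1 eqxx.
move=> p p2; have p2' : #|p| == 2 by rewrite p2.
by rewrite -(c_rel (exist _ p p2')) sum_vC opprK.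
Qed.
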